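(* Let $H=([n],E)$ be a hypergraph and $F\ne F'$ two edges. If $F\cap F'=\emptyset$ then $Q_F\cap Q_{F'}$ is homeomorphic to a sphere of dimension $n-\#F-\#F'$; if $F\cap F'\ne\emptyset$ then $Q_F\cap Q_{F'}$ is homeomorphic to a sphere of dimension $n-\#(F\cup F')-1$. In particular, $Q_F\cap Q_{F'}$ has no nonempty face if and only if $F\cup F'=[n]$ and $F\cap F'\neq\emptyset$.
   Context: A hypergraph $H=([n],E)$ has edges that are nonempty subsets of $[n]$; standing assumptions: every vertex in some edge, no edge of size 1, no edge properly contained in another. The coloring complex $\Delta_H$ has as faces the ordered set partitions $B_1|\cdots|B_r$ of $[n]$ into nonempty blocks (of dimension $r-2$) with at least one block containing an edge; a face is contained in another if it is obtained from it by repeatedly merging adjacent blocks. For $F\in E$, the edge sphere $Q_F$ is the subcomplex of faces having a block containing $F$. A sphere of dimension $-1$ means the empty space (only the empty face). *)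

From Stdlib Require Import Reals.
From mathcomp Require Import all_boot.

Set Implicit Arguments.
Unset Strict Implicit.
Unset Printing Implicit Defensive.

Definition is_hypergraph (n : nat) (E : {set {set 'I_n}}) : Prop :=
  [/\ (forall e, e \in E -> e != set0),
      (forall e, e \in E -> #|e| != 1),
      (forall v : 'I_n, exists2 e, e \in E & v \in e) &
      (forall e e', e \in E -> e' \in E -> ~~ (e \proper e'))].

Definition osp (n : nat) (P : seq {set 'I_n}) : Prop :=
  (forall B, B \in P -> B != set0) /\
  (forall i : 'I_n, count (fun B : {set 'I_n} => i \in B) P = 1).

Definition coloring_face (n : nat) (E : {set {set 'I_n}}) (P : seq {set 'I_n}) : Prop :=
  osp P /\ has (fun B : {set 'I_n} => [exists e in E, e \subset B]) P.

Definition edge_sphere_face (n : nat) (E : {set {set 'I_n}}) (F : {set 'I_n})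
  (P : seq {set 'I_n}) : Prop :=
  coloring_face E P /\ has (fun B : {set 'I_n} => F \subset B) P.

Definition blk (n : nat) (P : seq {set 'I_n}) (i : 'I_n) : nat :=
  find (fun B : {set 'I_n} => i \in B) P.

Definition Rsum (k : nat) (f : 'I_k -> R) : R := \big[Rplus/R0]_(i < k) f i.

Definition dist (k : nat) (x y : 'I_k -> R) : R :=
  sqrt (Rsum (fun i => Rmult (Rminus (x i) (y i)) (Rminus (x i) (y i)))).

(* The point x lies in the relatively open cell of the ordered set partition P
   in the braid fan: x is constant on blocks and strictly increasing from
   block to block. *)
Definition in_cell (n : nat) (P : seq {set 'I_n}) (x : 'I_n -> R) : Prop :=
  forall i j : 'I_n, Rle (x i) (x j) <-> (blk P i <= blk P j)%N.

(* The (n-2)-sphere carrying the Coxeter complex of type A_{n-1}: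
   unit vectors in the hyperplane sum x_i = 0. *)
Definition coxeter_sphere (n : nat) (x : 'I_n -> R) : Prop :=
  Rsum x = R0 /\ Rsum (fun i => Rmult (x i) (x i)) = R1.

(* Geometric realization of a subcomplex K (given by its set of faces) of
   the Coxeter complex: union of the open cells of its faces. *)
Definition realization (n : nat) (K : seq {set 'I_n} -> Prop) (x : 'I_n -> R) : Prop :=
  coxeter_sphere x /\ exists P, K P /\ in_cell P x.

Definition continuous_on (m k : nat) (A : ('I_m -> R) -> Prop) (f : ('I_m -> R) -> ('I_k -> R)) : Prop :=
  forall x, A x -> forall eps, Rlt R0 eps ->
    exists delta, Rlt R0 delta /\
      forall y, A y -> Rlt (dist y x) delta -> Rlt (dist (f y) (f x)) eps.

Definition homeomorphic (m k : nat) (A : ('I_m -> R) -> Prop) (B : ('I_k -> R) -> Prop) : Prop :=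
  exists (f : ('I_m -> R) -> ('I_k -> R)) (g : ('I_k -> R) -> ('I_m -> R)),
    (forall x, A x -> B (f x)) /\
    (forall y, B y -> A (g y)) /\
    (forall x, A x -> g (f x) = x) /\
    (forall y, B y -> f (g y) = y) /\
    continuous_on A f /\
    continuous_on B g.

(* Unit sphere in R^m, i.e. the sphere of dimension m-1
   (for m = 0 it is empty: the sphere of dimension -1). *)
Definition unit_sphere (m : nat) (y : 'I_m -> R) : Prop :=
  Rsum (fun i => Rmult (y i) (y i)) = R1.
Arguments unit_sphere m y : clear implicits.

From Pilot Require Import Defs.
From Stdlib Require Import Reals FunctionalExtensionality.
From mathcomp Require Import all_boot all_order all_algebra.
From mathcomp Require Import Rstruct zify.
From mathcomp.algebra_tactics Require Import ring lra.
Import GRing.Theory Num.Theory Order.TTheory.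
Local Open Scope ring_scope.
Set Implicit Arguments. Unset Strict Implicit.

(* A point x of the Coxeter sphere {sum x = 0, |x| = 1} lies in the open cell
   of the ordered set partition formed by its level sets; hence x lies in the
   realization of Q_F /\ Q_F' exactly when x is constant on F and on F'
   (realization_edge_spheres).  Such vectors form a linear subspace, described
   uniformly by a nonempty set A on which x is constant and a set S of free
   coordinates to which every coordinate outside A is tied (tied); the value
   on A is forced by sum x = 0, so restriction to S is a linear isomorphism
   onto R^#|S|, and radial projection turns it into a homeomorphism between
   the sphere in that subspace and the unit sphere of R^#|S|
   (sphere_section_homeomorphic, tied_sphere_homeomorphic).  If F and F' meet,
   take A = F u F' and S its complement; if they are disjoint, take A = F' and
   S = {f0} u complement of F u F' for some f0 in F.  Finally, the complex has no
   face with two or more blocks iff F and F' meet and cover [n], since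
   otherwise a two-block face exists (edge_spheres_no_proper_face). *)

Lemma sum_sq k (f : 'I_k -> R) : Rsum (fun i => Rmult (f i) (f i)) = \sum_i f i ^+ 2.
Proof. by apply: eq_bigr => i _; rewrite expr2. Qed.

Lemma coxeter_sphereE n (x : 'I_n -> R) :
  coxeter_sphere x <-> (\sum_i x i = 0 /\ \sum_i x i ^+ 2 = 1).
Proof. by rewrite /coxeter_sphere sum_sq. Qed.

Lemma unit_sphereE m (y : 'I_m -> R) : unit_sphere m y <-> \sum_i y i ^+ 2 = 1.
Proof. by rewrite /unit_sphere sum_sq. Qed.

(* Continuity of a real function on A with respect to the sup-distance
   max_i |y i - x i|; on R^n it is equivalent to Euclidean continuity, but
   it is far more convenient to propagate through formulas. *)
Definition supcont n (A : ('I_n -> R) -> Prop) (h : ('I_n -> R) -> R) :=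
  forall x, A x -> forall e : R, 0 < e -> exists2 d : R, 0 < d &
    forall y, A y -> (forall i, `|y i - x i| < d) -> `|h y - h x| < e.

Section SupContinuity.
Variables (n : nat) (A : ('I_n -> R) -> Prop).

Lemma supcont_ext (h1 h2 : ('I_n -> R) -> R) :
  (forall x, h1 x = h2 x) -> supcont A h1 -> supcont A h2.
Proof.
move=> E H x Ax e e0; have [d d0 Hd] := H x Ax e e0.
by exists d => // y Ay Hy; rewrite -!E; apply: Hd.
Qed.

Lemma supcont_const (c : R) : supcont A (fun _ => c).
Proof. by move=> x _ e e0; exists 1 => // y _ _; rewrite subrr normr0. Qed.

Lemma supcont_coord (i : 'I_n) : supcont A (fun x => x i).
Proof. by move=> x _ e e0; exists e => // y _; apply. Qed.

Lemma supcont_add (h1 h2 : ('I_n -> R) -> R) :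
  supcont A h1 -> supcont A h2 -> supcont A (fun x => h1 x + h2 x).
Proof.
move=> H1 H2 x Ax e e0; have e20 : 0 < e / 2 by rewrite divr_gt0.
have [d1 d10 Hd1] := H1 x Ax _ e20; have [d2 d20 Hd2] := H2 x Ax _ e20.
exists (Num.min d1 d2) => [|y Ay Hy]; first by rewrite lt_min d10 d20.
have /Hd1 K1 : forall i, `|y i - x i| < d1 by move=> i; move: (Hy i); rewrite lt_min => /andP[].
have /Hd2 K2 : forall i, `|y i - x i| < d2 by move=> i; move: (Hy i); rewrite lt_min => /andP[].
rewrite (_ : h1 y + h2 y - (h1 x + h2 x) = (h1 y - h1 x) + (h2 y - h2 x)); last by ring.
by apply: le_lt_trans (ler_normD _ _) _; rewrite [e]splitr ltrD ?K1 ?K2.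
Qed.

Lemma supcont_comp (h : ('I_n -> R) -> R) (g : R -> R) :
  (forall x, A x -> continuity_pt g (h x)) -> supcont A h -> supcont A (fun x => g (h x)).
Proof.
move=> Hg H x Ax e e0.
have [d1 [/RltP d10 Hd1]] := Hg x Ax e (elimT RltP e0).
have [d d0 Hd] := H x Ax _ d10.
exists d => // y Ay /(Hd y Ay) hyx; case: (eqVneq (h x) (h y)) => [->|ne].
  by rewrite subrr normr0.
have hyx' : Rlt (R_dist (h y) (h x)) d1 by rewrite /R_dist RabsE; apply/RltP.
have := Hd1 (h y) (conj (conj I (elimN eqP ne)) hyx').
by rewrite /= /R_dist RabsE => /RltP.
Qed.

Lemma supcont_scale (h : ('I_n -> R) -> R) (c : R) :
  supcont A h -> supcont A (fun x => c * h x).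
Proof.
apply: supcont_comp => x _; apply: (continuity_pt_scal id).
exact: derivable_continuous_pt (derivable_pt_id _).
Qed.

Lemma supcont_sq (h : ('I_n -> R) -> R) : supcont A h -> supcont A (fun x => h x ^+ 2).
Proof.
apply: (supcont_comp (g := fun t => t ^+ 2)) => x _.
have Cid : continuity_pt id (h x) by apply: derivable_continuous_pt; apply: derivable_pt_id.
exact: (continuity_pt_mult _ _ _ Cid Cid).
Qed.

(* Products, by polarization: a * b = ((a + b)^2 - (a - b)^2) / 4. *)
Lemma supcont_mul (h1 h2 : ('I_n -> R) -> R) :
  supcont A h1 -> supcont A h2 -> supcont A (fun x => h1 x * h2 x).
Proof.
move=> H1 H2.
apply: (supcont_ext (h1 := fun x =>
  4^-1 * ((h1 x + h2 x) ^+ 2 + (-1) * (h1 x + (-1) * h2 x) ^+ 2))); first by move=> x; field.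
apply/supcont_scale/supcont_add; first exact/supcont_sq/supcont_add.
exact/supcont_scale/supcont_sq/supcont_add/supcont_scale.
Qed.

Lemma supcont_inv (h : ('I_n -> R) -> R) :
  (forall x, A x -> h x != 0) -> supcont A h -> supcont A (fun x => (h x)^-1).
Proof.
move=> Hn; apply: (supcont_comp (g := fun t => t^-1)) => x Ax.
apply: (continuity_pt_inv id); first exact: derivable_continuous_pt (derivable_pt_id _).
exact/eqP/Hn.
Qed.

Lemma supcont_sqrt (h : ('I_n -> R) -> R) :
  (forall x, A x -> 0 <= h x) -> supcont A h -> supcont A (fun x => Num.sqrt (h x)).
Proof.
move=> Hn H; apply: (supcont_ext (h1 := fun x => sqrt (h x))) => [x|]; first by rewrite RsqrtE.
by apply: supcont_comp H => x Ax; apply/continuity_pt_sqrt/RleP/Hn.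
Qed.

Lemma supcont_sum (I : Type) (s : seq I) (F : I -> ('I_n -> R) -> R) :
  (forall i, supcont A (F i)) -> supcont A (fun x => \sum_(i <- s) F i x).
Proof.
move=> H; elim: s => [|a s IH].
  by apply: (supcont_ext (h1 := fun _ => 0)) (supcont_const _) => x; rewrite big_nil.
apply: (supcont_ext (h1 := fun x => F a x + \sum_(i <- s) F i x)) => [x|].
  by rewrite big_cons.
exact: supcont_add.
Qed.

Lemma supcont_sum_if (P : 'I_n -> bool) :
  supcont A (fun y => \sum_l (if P l then y l else 0)).
Proof.
by apply: supcont_sum => l; case: (P l); [apply: supcont_coord | apply: supcont_const].
Qed.
End SupContinuity.

Lemma common_radius (T : finType) (P : T -> R -> Prop) :
  (forall j d d', 0 < d' -> d' <= d -> P j d -> P j d') ->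
  (forall j, exists2 d, 0 < d & P j d) -> exists2 d, 0 < d & forall j, P j d.
Proof.
move=> Pmono H.
suff [d d0 Hd] : exists2 d, 0 < d & forall j, j \in enum T -> P j d.
  by exists d => // j; apply: Hd; rewrite mem_enum.
elim: (enum T) => [|a s [d d0 Hd]]; first by exists 1.
have [da da0 Ha] := H a; have m0 : 0 < Num.min d da by rewrite lt_min d0 da0.
exists (Num.min d da) => // j; rewrite inE => /orP[/eqP->|js].
  by apply: (Pmono a da) => //; rewrite ge_min lexx orbT.
by apply: (Pmono j d) => //; [rewrite ge_min lexx | apply: Hd].
Qed.

Definition norm2 k (u : 'I_k -> R) := Num.sqrt (\sum_i u i ^+ 2).

Lemma distE k (x y : 'I_k -> R) : Defs.dist x y = norm2 (fun i => x i - y i).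
Proof. by rewrite /Defs.dist RsqrtE sum_sq. Qed.

Lemma sumsq_ge0 k (u : 'I_k -> R) : 0 <= \sum_i u i ^+ 2.
Proof. by apply: sumr_ge0 => i _; rewrite sqr_ge0. Qed.

Lemma norm2_sq k (u : 'I_k -> R) : norm2 u ^+ 2 = \sum_i u i ^+ 2.
Proof. by rewrite /norm2 sqr_sqrtr // sumsq_ge0. Qed.

Lemma coord_le_norm2 k (u : 'I_k -> R) i : `|u i| <= norm2 u.
Proof.
rewrite -sqrtr_sqr /norm2; apply: ler_wsqrtr.
by rewrite (bigD1 i) //= lerDl; apply: sumr_ge0 => j _; rewrite sqr_ge0.
Qed.

Lemma norm2_scale k (u : 'I_k -> R) c : norm2 (fun i => c * u i) = `|c| * norm2 u.
Proof.
rewrite /norm2 -sqrtr_sqr -sqrtrM ?sqr_ge0 // mulr_sumr.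
by congr Num.sqrt; apply: eq_bigr => i _; rewrite exprMn.
Qed.

Lemma norm2_eq0 k (u : 'I_k -> R) : norm2 u = 0 -> forall i, u i = 0.
Proof.
move=> H i; apply/eqP; rewrite -normr_eq0 eq_le normr_ge0 andbT -H.
exact: coord_le_norm2.
Qed.

Definition normalize k (u : 'I_k -> R) (i : 'I_k) := (norm2 u)^-1 * u i.

Lemma normalize_unit k (u : 'I_k -> R) : norm2 u != 0 -> \sum_i normalize u i ^+ 2 = 1.
Proof.
move=> H; under eq_bigr do rewrite exprMn.
by rewrite -mulr_sumr -norm2_sq exprVn mulVf // expf_neq0.
Qed.

Lemma normalize_inverse k l (p : ('I_k -> R) -> 'I_l -> R) (q : ('I_l -> R) -> 'I_k -> R) u :
  (forall c v, q (fun i => c * v i) = fun j => c * q v j) -> q (p u) = u ->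
  \sum_i u i ^+ 2 = 1 -> norm2 (p u) != 0 -> normalize (q (normalize (p u))) = u.
Proof.
move=> qZ qp u1 nz; have n1 : norm2 u = 1 by rewrite /norm2 u1 sqrtr1.
rewrite /normalize qZ qp norm2_scale n1 mulr1 ger0_norm ?invr_ge0 ?sqrtr_ge0 //.
by apply: functional_extensionality => i; rewrite invrK mulrA mulfV ?mul1r.
Qed.


(* Coordinatewise sup-continuity gives continuity in the sense of Defs:
   if every coordinate moves by less than eps/(k+1), the image moves by less
   than eps in the Euclidean norm. *)
Lemma continuous_on_of_supcont m k (A : ('I_m -> R) -> Prop) (f : ('I_m -> R) -> 'I_k -> R) :
  (forall j, supcont A (fun x => f x j)) -> continuous_on A f.
Proof.
move=> H x Ax eps /RltP eps0.
pose e' := eps / (k%:R + 1).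
have k1 : 0 < k%:R + 1 :> R by rewrite ltr_wpDl.
have e'0 : 0 < e' by rewrite divr_gt0.
pose P j d := forall y, A y -> (forall i, `|y i - x i| < d) -> `|f y j - f x j| < e'.
have [d d0 Hd] : exists2 d, 0 < d & forall j, P j d.
  apply: common_radius (fun j => H j x Ax e' e'0) => j d1 d2 d20 d21 HP y Ay Hy.
  by apply: HP => // i; apply: lt_le_trans (Hy i) d21.
exists d; split => [|y Ay /RltP dyx]; first exact/RltP.
have Hy : forall i, `|y i - x i| < d.
  by move=> i; apply: le_lt_trans (coord_le_norm2 (fun i => y i - x i) i) _; rewrite -distE.
apply/RltP; rewrite distE /norm2 -[eps]ger0_norm ?ltW // -sqrtr_sqr.
rewrite ltr_sqrt ?exprn_gt0 ?normr_gt0 ?gt_eqF //.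
apply: (le_lt_trans (y := \sum_(j < k) e' ^+ 2)).
  apply: ler_sum => j _; rewrite -[X in X <= _]ger0_norm ?sqr_ge0 // normrX.
  by rewrite lerXn2r ?nnegrE ?normr_ge0 ?ltW // (Hd j y Ay Hy).
rewrite sumr_const card_ord.
have -> : eps = e' * (k%:R + 1) by rewrite /e' divfK // gt_eqF.
rewrite -mulr_natr; have : 0 <= k%:R :> R by [].
nra.
Qed.

Lemma homeomorphic_ext m k (A A' : ('I_m -> R) -> Prop) (B : ('I_k -> R) -> Prop) :
  (forall x, A x <-> A' x) -> homeomorphic A' B -> homeomorphic A B.
Proof.
move=> E [f [g [fB [gA [gf [fg [fc gc]]]]]]].
exists f, g; split; [|split; [|split; [|split; [|split]]]].
- by move=> x /E; apply: fB.
- by move=> y /gA /E.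
- by move=> x /E; apply: gf.
- exact: fg.
- move=> x /E Ax e e0; have [d [d0 Hd]] := fc x Ax e e0.
  by exists d; split => // y /E; apply: Hd.
- move=> y By e e0; have [d [d0 Hd]] := gc y By e e0.
  by exists d; split => // x Bx dx; apply/E; apply: Hd.
Qed.

Lemma homogeneous_zero k l (h : ('I_k -> R) -> 'I_l -> R) :
  (forall c u, h (fun i => c * u i) = fun j => c * h u j) -> h (fun _ => 0) = fun _ => 0.
Proof.
move=> hZ; rewrite (_ : (fun _ => 0) = fun i => 0 * (fun _ : 'I_k => 0 : R) i); last first.
  by apply: functional_extensionality => i; rewrite mul0r.
by rewrite hZ; apply: functional_extensionality => j; rewrite mul0r.
Qed.

Lemma sumsq0 k : (\sum_(i < k) (0 : R) ^+ 2 == 1) = false.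
Proof. by rewrite expr0n big1 // eq_sym oner_eq0. Qed.

Lemma sphere_section_homeomorphic n m (V : ('I_n -> R) -> Prop)
    (phi : ('I_n -> R) -> 'I_m -> R) (psi : ('I_m -> R) -> 'I_n -> R) :
  (forall x c, V x -> V (fun i => c * x i)) ->
  (forall x, V x -> \sum_i x i = 0) ->
  (forall c x, phi (fun i => c * x i) = fun j => c * phi x j) ->
  (forall c y, psi (fun j => c * y j) = fun i => c * psi y i) ->
  (forall x, V x -> psi (phi x) = x) ->
  (forall y, phi (psi y) = y) ->
  (forall y, V (psi y)) ->
  (forall j A, supcont A (fun x => phi x j)) ->
  (forall i B, supcont B (fun y => psi y i)) ->
  homeomorphic (fun x => coxeter_sphere x /\ V x) (unit_sphere m).
Proof.
move=> Vscale Vsum phiZ psiZ psiK phiK Vpsi phic psic.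
have psi0 : psi (fun _ => 0) = fun _ => 0 by apply: homogeneous_zero.
have phi0 : phi (fun _ => 0) = fun _ => 0 by apply: homogeneous_zero.
have nA : forall x, coxeter_sphere x /\ V x -> norm2 (phi x) != 0.
  move=> x [/coxeter_sphereE [_ s1] Vx]; apply/eqP => /norm2_eq0 H0.
  move/eqP: s1; rewrite -(psiK x Vx) (_ : phi x = fun _ => 0) ?psi0 ?sumsq0 //.
  exact: functional_extensionality.
have nB : forall y, unit_sphere m y -> norm2 (psi y) != 0.
  move=> y /unit_sphereE s1; apply/eqP => /norm2_eq0 H0.
  move/eqP: s1; rewrite -(phiK y) (_ : psi y = fun _ => 0) ?phi0 ?sumsq0 //.
  exact: functional_extensionality.
exists (fun x => normalize (phi x)), (fun y => normalize (psi y)).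
split; [|split; [|split; [|split; [|split]]]].
- by move=> x Ax; apply/unit_sphereE/normalize_unit/nA.
- move=> y By; split; last exact: Vscale.
  apply/coxeter_sphereE; split; last exact: normalize_unit (nB y By).
  by rewrite -mulr_sumr Vsum // mulr0.
- move=> x [Cx Vx]; have [_ s1] := proj1 (coxeter_sphereE x) Cx.
  exact: normalize_inverse psiZ (psiK x Vx) s1 (nA x (conj Cx Vx)).
- move=> y By; have s1 := proj1 (unit_sphereE y) By.
  exact: normalize_inverse phiZ (phiK y) s1 (nB y By).
- apply: continuous_on_of_supcont => j; apply: supcont_mul (phic _ _).
  apply: supcont_inv => [x Ax|]; first exact: nA.
  apply: supcont_sqrt => [x _|]; first exact: sumsq_ge0.
  by apply: supcont_sum => l; apply/supcont_sq/phic.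
- apply: continuous_on_of_supcont => j; apply: supcont_mul (psic _ _).
  apply: supcont_inv => [y By|]; first exact: nB.
  apply: supcont_sqrt => [y _|]; first exact: sumsq_ge0.
  by apply: supcont_sum => l; apply/supcont_sq/psic.
Qed.

Section OrderedSetPartitions.
Variables (n : nat) (P : seq {set 'I_n}).
Hypothesis HP : osp P.

Lemma osp_block_unique (B B' : {set 'I_n}) i :
  B \in P -> B' \in P -> i \in B -> i \in B' -> B = B'.
Proof.
move=> BP B'P iB iB'; pose a := fun C : {set 'I_n} => i \in C.
have [C E] : exists C, filter a P = [:: C].
  move: (size_filter a P); rewrite (proj2 HP).
  by case: (filter a P) => [|C [|? ?]] //; exists C.
have blockC D : D \in P -> i \in D -> D = C.
  by move=> DP iD; apply/eqP; rewrite -mem_seq1 -E mem_filter /a iD.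
by rewrite (blockC B BP iB) (blockC B' B'P iB').
Qed.

Lemma blk_index (B : {set 'I_n}) i : B \in P -> i \in B -> blk P i = index B P.
Proof.
move=> BP iB; apply: eq_in_find => C CP /=; apply/idP/eqP => [iC|->//].
exact: osp_block_unique CP BP iC iB.
Qed.

Lemma osp_full_block (B : {set 'I_n}) :
  B \in P -> (forall j, j \in B) -> size P = 1%N.
Proof.
move=> BP Ball; have /set0Pn [j jB] := proj1 HP B BP.
rewrite -(proj2 HP j) -count_predT; apply: eq_in_count => C CP /=.
have /set0Pn [k kC] := proj1 HP C CP.
by rewrite (osp_block_unique CP BP kC (Ball k)) jB.
Qed.
End OrderedSetPartitions.

Definition const_on n (S : {set 'I_n}) (x : 'I_n -> R) :=
  forall i j, i \in S -> j \in S -> x i = x j.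

Lemma const_on_block n (P : seq {set 'I_n}) (B S : {set 'I_n}) x :
  osp P -> in_cell P x -> B \in P -> S \subset B -> const_on S x.
Proof.
move=> HP Hx BP /subsetP SB i j iS jS.
have e : blk P i = blk P j by rewrite !(blk_index HP BP) ?SB.
by apply: Rle_antisym; [apply/(Hx i j) | apply/(Hx j i)]; rewrite e.
Qed.

Definition levels n (x : 'I_n -> R) :=
  sort (fun a b : R => a <= b) (undup [seq x i | i <- enum 'I_n]).
Definition level_partition n (x : 'I_n -> R) := [seq [set i | x i == v] | v <- levels x].

Section LevelPartition.
Variables (n : nat) (x : 'I_n -> R).

Lemma levels_uniq : uniq (levels x).
Proof. by rewrite sort_uniq undup_uniq. Qed.

Lemma mem_levels i : x i \in levels x.
Proof. by rewrite mem_sort mem_undup; apply: map_f; rewrite mem_enum. Qed.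

Lemma levels_sorted : sorted (fun a b : R => a <= b) (levels x).
Proof. by apply: sort_sorted => a b; apply: le_total. Qed.

Lemma level_partition_osp : osp (level_partition x).
Proof.
split.
  move=> B /mapP [v]; rewrite mem_sort mem_undup => /mapP [i _ ->] ->.
  by apply/set0Pn; exists i; rewrite inE.
move=> i; rewrite count_map (eq_count (a2 := pred1 (x i))) => [|v /=]; last first.
  by rewrite inE eq_sym.
by rewrite count_uniq_mem ?levels_uniq ?mem_levels.
Qed.

Lemma level_partition_cell : in_cell (level_partition x) x.
Proof.
have blkE i : blk (level_partition x) i = index (x i) (levels x).
  by rewrite /blk /level_partition find_map /index; apply: eq_find => v /=; rewrite inE eq_sym.
move=> i j; rewrite !blkE; split => [/RleP le|le]; last first.
  apply/RleP; exact: (sorted_leq_index le_trans lexx levels_sorted _ _ (mem_levels i) (mem_levels j) le).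
rewrite leqNgt; apply/negP => lt.
have le2 := sorted_ltn_index le_trans levels_sorted _ _ (mem_levels j) (mem_levels i) lt.
by move: lt; rewrite (_ : x i = x j) ?ltnn //; apply/eqP; rewrite eq_le le le2.
Qed.

Lemma level_partition_edge_face (E : {set {set 'I_n}}) (F : {set 'I_n}) :
  F \in E -> F != set0 -> const_on F x -> edge_sphere_face E F (level_partition x).
Proof.
move=> HF /set0Pn [f0 f0F] Hc; pose B := [set i | x i == x f0].
have BP : B \in level_partition x by apply/map_f/mem_levels.
have FB : F \subset B by apply/subsetP => i iF; rewrite inE (Hc i f0 iF f0F).
split; last by apply/hasP; exists B.
split; first exact: level_partition_osp.
by apply/hasP; exists B => //; apply/existsP; exists F; rewrite HF.
Qed.
End LevelPartition.

Lemma edge_sphere_face_block n (E : {set {set 'I_n}}) (F : {set 'I_n}) P :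
  edge_sphere_face E F P -> osp P /\ exists2 B, B \in P & F \subset B.
Proof. by move=> [[HP _] /hasP [B BP FB]]; split => //; exists B. Qed.

Lemma realization_edge_spheres n (E : {set {set 'I_n}}) (F F' : {set 'I_n}) x :
  F \in E -> F' \in E -> F != set0 -> F' != set0 ->
  realization (fun P => edge_sphere_face E F P /\ edge_sphere_face E F' P) x <->
  coxeter_sphere x /\ const_on F x /\ const_on F' x.
Proof.
move=> HF HF' F0 F'0; split.
  move=> [Cx [P [[H1 H2] Hx]]]; split => //.
  have [HP [B BP FB]] := edge_sphere_face_block H1.
  have [_ [B' B'P F'B']] := edge_sphere_face_block H2.
  by split; [apply: (const_on_block HP Hx BP FB) | apply: (const_on_block HP Hx B'P F'B')].
move=> [Cx [c1 c2]]; split => //; exists (level_partition x).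
split; last exact: level_partition_cell.
by split; apply: level_partition_edge_face.
Qed.

Lemma two_block_face n (E : {set {set 'I_n}}) (F G A : {set 'I_n}) :
  F \in E -> A != set0 -> ~: A != set0 -> F \subset A -> G \subset A \/ G \subset ~: A ->
  edge_sphere_face E F [:: A; ~: A] /\ edge_sphere_face E G [:: A; ~: A].
Proof.
move=> HF A0 CA0 FA GA.
have HP : osp [:: A; ~: A].
  split=> [B|i /=]; first by rewrite !inE => /orP[/eqP->|/eqP->].
  by rewrite inE; case: (i \in A).
have CF : coloring_face E [:: A; ~: A].
  by split=> //=; rewrite orbF; apply/orP; left; apply/existsP; exists F; rewrite HF.
split; split=> //=; first by rewrite FA.
by case: GA => ->; rewrite ?orbT.
Qed.

(* Q_F /\ Q_F' has no face with two or more blocks iff F and F' meet and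
   cover [n]: otherwise a two-block face separates F from F', or F u F' from
   the rest; conversely the block containing a common vertex contains F u F'. *)
Lemma edge_spheres_no_proper_face n (E : {set {set 'I_n}}) (F F' : {set 'I_n}) :
  F \in E -> F != set0 -> F' != set0 ->
  (forall P, edge_sphere_face E F P -> edge_sphere_face E F' P -> size P = 1%N)
    <-> (F :|: F' = setT /\ F :&: F' != set0).
Proof.
move=> HF F0 F'0; split=> [Hone|[U /set0Pn [k kFF']] P H1 H2]; last first.
  move: kFF'; rewrite inE => /andP [kF kF'].
  have [HP [B BP FB]] := edge_sphere_face_block H1.
  have [_ [B' B'P F'B']] := edge_sphere_face_block H2.
  have BB' : B' = B := osp_block_unique HP B'P BP (subsetP F'B' k kF') (subsetP FB k kF).
  apply: (osp_full_block HP BP) => j; have : j \in F :|: F' by rewrite U inE.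
  by rewrite inE => /orP [jF | jF']; [apply: (subsetP FB) | rewrite -BB'; apply: (subsetP F'B')].
have I : F :&: F' != set0.
  apply/negP => /eqP I0.
  have F'C : F' \subset ~: F.
    apply/subsetP => i iF'; rewrite inE; apply: contraFN (in_set0 i) => iF.
    by rewrite -I0 inE iF iF'.
  have CF0 : ~: F != set0.
    by case/set0Pn: F'0 => i iF'; apply/set0Pn; exists i; apply: (subsetP F'C).
  have [h1 h2] := two_block_face HF F0 CF0 (subxx F) (or_intror F'C).
  by have := Hone _ h1 h2.
split => //; apply/eqP/negPn/negP => NU.
have CA0 : ~: (F :|: F') != set0.
  by apply: contra NU => /eqP C0; rewrite -[F :|: F']setCK C0 setC0.
have A0 : F :|: F' != set0.
  by case/set0Pn: F0 => i iF; apply/set0Pn; exists i; rewrite inE iF.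
have [h1 h2] := two_block_face HF A0 CA0 (subsetUl F F') (or_introl (subsetUr F F')).
by have := Hone _ h1 h2.
Qed.

(* A is a nonempty set of coordinates on which x is constant; every other
   coordinate i is tied to a representative rho i in a set S disjoint from A.
   The free coordinates are those in S: the common value on A is then forced
   by sum x = 0. *)
Section Coordinates.
Variables (n : nat) (A S : {set 'I_n}) (rho : 'I_n -> 'I_n).
Hypotheses (A0 : A != set0) (AS : [disjoint A & S])
  (rhoS : forall i, i \notin A -> rho i \in S) (rhoK : forall s, s \in S -> rho s = s).

Definition tied (x : 'I_n -> R) :=
  [/\ \sum_i x i = 0, const_on A x & forall i, i \notin A -> x i = x (rho i)].

Definition restrict (x : 'I_n -> R) (j : 'I_#|S|) := x (enum_val j).

Definition extend_rep (y : 'I_#|S| -> R) (s : 'I_n) :=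
  \sum_j (if enum_val j == s then y j else 0).

Definition rest_sum (y : 'I_#|S| -> R) := \sum_(k | k \notin A) extend_rep y (rho k).

Definition extend (y : 'I_#|S| -> R) (i : 'I_n) :=
  if i \in A then - rest_sum y / #|A|%:R else extend_rep y (rho i).

Lemma cardA_neq0 : #|A|%:R != 0 :> R.
Proof. by rewrite pnatr_eq0 cards_eq0. Qed.

Lemma notin_A s : s \in S -> s \notin A.
Proof. by move=> sS; apply: contraTN sS => sA; rewrite (disjointFr AS sA). Qed.

Lemma extend_rep_val y j : extend_rep y (enum_val j) = y j.
Proof.
rewrite /extend_rep (bigD1 j) //= eqxx big1 ?addr0 // => l lj.
by rewrite (inj_eq enum_val_inj) (negbTE lj).
Qed.

Lemma extend_rep_restrict x s : s \in S -> extend_rep (restrict x) s = x s.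
Proof. by move=> sS; rewrite -{1 2}(enum_rankK_in sS sS) extend_rep_val. Qed.

Lemma extend_repZ c y s : extend_rep (fun j => c * y j) s = c * extend_rep y s.
Proof. by rewrite mulr_sumr; apply: eq_bigr => j _; case: ifP; rewrite ?mulr0. Qed.

Lemma sum_split (x : 'I_n -> R) :
  \sum_i x i = \sum_(i in A) x i + \sum_(i | i \notin A) x i.
Proof. exact: bigID. Qed.

Lemma restrictK y : restrict (extend y) = y.
Proof.
apply: functional_extensionality => j; have jS := enum_valP j.
by rewrite /restrict /extend (negbTE (notin_A jS)) rhoK // extend_rep_val.
Qed.

Lemma extendK x : tied x -> extend (restrict x) = x.
Proof.
case=> sum0 cA tie; apply: functional_extensionality => i; rewrite /extend.
case: ifP => iA; last by rewrite extend_rep_restrict ?rhoS ?iA // -tie ?iA.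
have -> : rest_sum (restrict x) = \sum_(k | k \notin A) x k.
  by apply: eq_bigr => k kA; rewrite extend_rep_restrict ?rhoS // -tie.
have sA : \sum_(k in A) x k = x i * #|A|%:R.
  by rewrite mulr_natr -sumr_const; apply: eq_bigr => k kA; apply: cA.
apply: (mulIf cardA_neq0); rewrite divfK ?cardA_neq0 //.
by apply/eqP; rewrite eq_sym -addr_eq0 -sA -sum_split sum0.
Qed.

Lemma extend_tied y : tied (extend y).
Proof.
split=> [|i j iA jA|i iA]; rewrite /extend ?iA ?jA //.
  rewrite sum_split (eq_bigr (fun _ => - rest_sum y / #|A|%:R)) => [|i ->] //.
  rewrite sumr_const (eq_bigr (fun k => extend_rep y (rho k))) => [|i /negbTE ->] //.
  by rewrite -/(rest_sum y) -(mulr_natr (- rest_sum y / _)) divfK ?cardA_neq0 // addNr.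
have riS := rhoS iA.
by rewrite (negbTE iA) (negbTE (notin_A riS)) (rhoK riS).
Qed.

Lemma extendZ c y : extend (fun j => c * y j) = fun i => c * extend y i.
Proof.
apply: functional_extensionality => i; rewrite /extend /rest_sum extend_repZ.
case: ifP => // _; rewrite (eq_bigr (fun k => c * extend_rep y (rho k))) => [|k _].
  by rewrite -mulr_sumr; ring.
exact: extend_repZ.
Qed.

Lemma supcont_extend_rep (B : ('I_#|S| -> R) -> Prop) s : supcont B (extend_rep^~ s).
Proof. exact: supcont_sum_if. Qed.

Lemma supcont_extend i (B : ('I_#|S| -> R) -> Prop) : supcont B (extend^~ i).
Proof.
have [iA|iA] := boolP (i \in A); last first.
  apply: (supcont_ext (h1 := extend_rep^~ (rho i))) => [y|]; last exact: supcont_extend_rep.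
  by rewrite /extend (negbTE iA).
apply: (supcont_ext (h1 := fun y => (- #|A|%:R^-1) * rest_sum y)) => [y|].
  by rewrite /extend iA; ring.
apply: supcont_scale; rewrite /rest_sum.
apply: (supcont_ext (h1 := fun y => \sum_k (if k \notin A then extend_rep y (rho k) else 0))).
  by move=> y; rewrite -big_mkcond.
by apply: supcont_sum => k; case: (k \notin A); [apply: supcont_extend_rep | apply: supcont_const].
Qed.

Theorem tied_sphere_homeomorphic :
  homeomorphic (fun x => coxeter_sphere x /\ tied x) (unit_sphere #|S|).
Proof.
apply: (sphere_section_homeomorphic (phi := restrict) (psi := extend)).
- move=> x c [s0 cA tie]; split=> [|i j iA jA|i iA]; last by rewrite tie.
    by rewrite -mulr_sumr s0 mulr0.
  by rewrite (cA i j).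
- by move=> x [].
- by [].
- exact: extendZ.
- exact: extendK.
- exact: restrictK.
- exact: extend_tied.
- by move=> j B; apply: supcont_coord.
- exact: supcont_extend.
Qed.
End Coordinates.

Section TwoEdges.
Variables (n : nat) (F F' : {set 'I_n}).

Definition constant_on_edges (x : 'I_n -> R) :=
  coxeter_sphere x /\ const_on F x /\ const_on F' x.

(* If F and F' meet, x is constant on F u F': all other coordinates are free. *)
Lemma meeting_edges_sphere : F :&: F' != set0 ->
  homeomorphic constant_on_edges (unit_sphere (n - #|F :|: F'|)).
Proof.
case/set0Pn=> k; rewrite inE => /andP [kF kF'].
set G := F :|: F'.
have G0 : G != set0 by apply/set0Pn; exists k; rewrite inE kF.
have GC : [disjoint G & ~: G] by rewrite -setI_eq0 setICr.
have -> : (n - #|G|)%N = #|~: G| by have := cardsC G; rewrite card_ord; lia.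
have rhoS i : i \notin G -> id i \in ~: G by rewrite in_setC.
apply: homeomorphic_ext (tied_sphere_homeomorphic G0 GC rhoS (fun _ _ => erefl)) => x.
split=> [[Cx [c1 c2]]|[Cx [_ cG _]]]; split=> //.
  split=> [|i j iG jG|//]; first by case/coxeter_sphereE: Cx.
  have toK l : l \in G -> x l = x k.
    by rewrite inE => /orP [lF|lF']; [apply: c1 | apply: c2].
  by rewrite toK // (toK j).
by split=> i j iS jS; apply: cG; rewrite inE ?iS ?jS ?orbT.
Qed.

(* If F and F' are disjoint, x is constant on F and on F'; pick f0 in F as
   representative of F: the free coordinates are f0 and those outside F u F'. *)
Lemma disjoint_edges_sphere : F != set0 -> F' != set0 -> F :&: F' = set0 ->
  homeomorphic constant_on_edges (unit_sphere (n - #|F| - #|F'| + 1)).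
Proof.
move=> /set0Pn [f0 f0F] F'0 I0.
have notF' i : i \in F -> i \notin F'.
  by move=> iF; apply: contraFN (in_set0 i) => iF'; rewrite -I0 inE iF iF'.
set S := f0 |: ~: (F :|: F').
pose rho i := if i \in F then f0 else i.
have F'S : [disjoint F' & S].
  rewrite -setI_eq0; apply/eqP/setP => i; rewrite !inE.
  apply/negP => /andP [iF' /orP [/eqP ef|]]; last by rewrite iF' orbT.
  by move: iF'; rewrite ef (negbTE (notF' _ f0F)).
have rhoS i : i \notin F' -> rho i \in S.
  by rewrite /rho !inE; case: ifP => [_ _|iF iF']; rewrite ?eqxx // iF (negbTE iF') orbT.
have rhoK s : s \in S -> rho s = s.
  by rewrite /rho !inE => /orP [/eqP ->|]; [rewrite f0F | rewrite negb_or => /andP [/negbTE ->]].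
have -> : (n - #|F| - #|F'| + 1)%N = #|S|.
  have := cardsC (F :|: F'); rewrite card_ord cardsU I0 cards0 subn0.
  by rewrite cardsU1 in_setC in_setU f0F /=; lia.
apply: homeomorphic_ext (tied_sphere_homeomorphic F'0 F'S rhoS rhoK) => x.
split=> [[Cx [c1 c2]]|[Cx [_ c2 tie]]]; split=> //.
  split=> // [|i]; first by case/coxeter_sphereE: Cx.
  by rewrite /rho; case: ifP => // iF _; apply: c1.
split=> // i j iF jF; rewrite tie ?notF' // (tie j) ?notF' //.
by rewrite /rho iF jF.
Qed.
End TwoEdges.

Local Close Scope ring_scope.

Theorem mainTheorem12 (n : nat) (E : {set {set 'I_n}}) (HE : is_hypergraph E)
  (F F' : {set 'I_n}) (HF : F \in E) (HF' : F' \in E) (Hne : F != F') :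
  [/\ (F :&: F' = set0 ->
         homeomorphic
           (realization (fun P => edge_sphere_face E F P /\ edge_sphere_face E F' P))
           (unit_sphere (n - #|F| - #|F'| + 1)%N)),
      (F :&: F' != set0 ->
         homeomorphic
           (realization (fun P => edge_sphere_face E F P /\ edge_sphere_face E F' P))
           (unit_sphere (n - #|F :|: F'|)%N)) &
      ((forall P, edge_sphere_face E F P -> edge_sphere_face E F' P -> size P = 1%N)
         <-> (F :|: F' = setT /\ F :&: F' != set0))].
Proof.
have [edge_nonempty _ _ _] := HE.
have F0 := edge_nonempty F HF; have F'0 := edge_nonempty F' HF'.
have realE x := realization_edge_spheres x HF HF' F0 F'0.
split.
- by move=> I0; apply: homeomorphic_ext realE (disjoint_edges_sphere F0 F'0 I0).
- by move=> I; apply: homeomorphic_ext realE (meeting_edges_sphere I).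
- exact: edge_spheres_no_proper_face.
Qed.
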